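(* For every $n\ge4$, every ortholattice satisfying $n$-Go also satisfies $(n-1)$-Go.
   Context: An ortholattice is a bounded lattice with an operation $'$ satisfying $a''=a$, $a\le b\Rightarrow b'\le a'$, $a\cap a'=0$ and $a\cup a'=1$. Write $a\to b=a'\cup(a\cap b)$. The Godowski identity is $$a_1\overset{\gamma}{\equiv}a_n=(a_1\to a_2)\cap(a_2\to a_3)\cap\cdots\cap(a_{n-1}\to a_n)\cap(a_n\to a_1),$$ and $a_n\overset{\gamma}{\equiv}a_1=(a_n\to a_{n-1})\cap\cdots\cap(a_2\to a_1)\cap(a_1\to a_n)$. $n$-Go is the equation $a_1\overset{\gamma}{\equiv}a_n=a_n\overset{\gamma}{\equiv}a_1$, required for all $a_1,\dots,a_n$. *)

From Stdlib Require Import Arith List.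

Record Ortholattice := {
  carrier :> Type;
  meet : carrier -> carrier -> carrier;
  join : carrier -> carrier -> carrier;
  compl : carrier -> carrier;
  bot : carrier;
  top : carrier;
  meet_comm : forall a b, meet a b = meet b a;
  join_comm : forall a b, join a b = join b a;
  meet_assoc : forall a b c, meet a (meet b c) = meet (meet a b) c;
  join_assoc : forall a b c, join a (join b c) = join (join a b) c;
  meet_absorb : forall a b, meet a (join a b) = a;
  join_absorb : forall a b, join a (meet a b) = a;
  meet_top : forall a, meet a top = a;
  join_bot : forall a, join a bot = a;
  compl_invol : forall a, compl (compl a) = a;
  compl_antitone : forall a b, meet a b = a -> meet (compl b) (compl a) = compl b;
  meet_compl : forall a, meet a (compl a) = bot;
  join_compl : forall a, join a (compl a) = top
}.

Arguments meet {o}.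
Arguments join {o}.
Arguments compl {o}.

Definition ole {L : Ortholattice} (a b : L) : Prop := meet a b = a.

Definition oimp {L : Ortholattice} (a b : L) : L := join (compl a) (meet a b).

Fixpoint chain_imp {L : Ortholattice} (a : nat -> L) (k : nat) : L :=
  match k with
  | 0 => top L
  | 1 => oimp (a 1) (a 2)
  | S k' => meet (chain_imp a k') (oimp (a k) (a (S k)))
  end.

Definition godowski_fwd {L : Ortholattice} (n : nat) (a : nat -> L) : L :=
  meet (chain_imp a (n - 1)) (oimp (a n) (a 1)).

(* reversed chain: rchain_imp a k = (a n -> a(n-1)) /\ ... /\ (a(n-k+1) -> a(n-k)) *)
Fixpoint rchain_imp {L : Ortholattice} (n : nat) (a : nat -> L) (k : nat) : L :=
  match k with
  | 0 => top L
  | 1 => oimp (a n) (a (n - 1))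
  | S k' => meet (rchain_imp n a k') (oimp (a (n - k')) (a (n - k)))
  end.

Definition godowski_bwd {L : Ortholattice} (n : nat) (a : nat -> L) : L :=
  meet (rchain_imp n a (n - 1)) (oimp (a 1) (a n)).

(* n-Go: for all a_1, ..., a_n (indices 1..n of a; other values irrelevant) *)
Definition nGo (L : Ortholattice) (n : nat) : Prop :=
  forall a : nat -> L, godowski_fwd n a = godowski_bwd n a.

From Stdlib Require Import Arith Lia.

(* Proof strategy.  n-Go implies (n-1)-Go by stuttering: given a_1, ..., a_m
   (m = n - 1), apply n-Go to the sequence a_1, ..., a_m, a_m of length m + 1
   obtained by repeating the last term.  In both Godowski meets of the longer
   sequence the only new conjunct is the implication a_m -> a_m, which equals
   the top element and so drops out, leaving exactly the two Godowski meets of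
   the original sequence. *)

Section OrthoFacts.
Variable L : Ortholattice.

Lemma meet_idem (x : L) : meet x x = x.
Proof. rewrite <- (join_absorb L x x) at 2. apply meet_absorb. Qed.

Lemma top_meet (x : L) : meet (top L) x = x.
Proof. rewrite meet_comm. apply meet_top. Qed.

Lemma oimp_self (x : L) : oimp x x = top L.
Proof. unfold oimp. rewrite meet_idem, join_comm. apply join_compl. Qed.

Lemma chain_imp_ext (a b : nat -> L) (k : nat) :
  (forall i, i <= S k -> a i = b i) -> chain_imp a k = chain_imp b k.
Proof.
  induction k as [|[|k] IH]; intro Hab; [reflexivity| |].
  - cbn [chain_imp]. rewrite !Hab by lia. reflexivity.
  - change (meet (chain_imp a (S k)) (oimp (a (S (S k))) (a (S (S (S k)))))
          = meet (chain_imp b (S k)) (oimp (b (S (S k))) (b (S (S (S k)))))).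
    rewrite IH by (intros; apply Hab; lia). rewrite !Hab by lia. reflexivity.
Qed.

Lemma rchain_imp_ext (n : nat) (a b : nat -> L) (k : nat) :
  (forall i, i <= n -> a i = b i) -> rchain_imp n a k = rchain_imp n b k.
Proof.
  intro Hab. induction k as [|[|k] IH]; [reflexivity| |].
  - cbn [rchain_imp]. rewrite !Hab by lia. reflexivity.
  - change (meet (rchain_imp n a (S k)) (oimp (a (n - S k)) (a (n - S (S k))))
          = meet (rchain_imp n b (S k)) (oimp (b (n - S k)) (b (n - S (S k))))).
    rewrite IH, !Hab by lia. reflexivity.
Qed.

Lemma rchain_imp_peel (m : nat) (a : nat -> L) (k : nat) : 1 <= k ->
  rchain_imp (S m) a (S k) = meet (oimp (a (S m)) (a m)) (rchain_imp m a k).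
Proof.
  intro Hk. induction k as [|[|k] IH]; [lia| |].
  - cbn [rchain_imp]. replace (S m - 1) with m by lia.
    replace (m - 1) with (S m - 2) by lia. reflexivity.
  - change (meet (rchain_imp (S m) a (S (S k)))
                 (oimp (a (S m - S (S k))) (a (S m - S (S (S k)))))
          = meet (oimp (a (S m)) (a m))
                 (meet (rchain_imp m a (S k)) (oimp (a (m - S k)) (a (m - S (S k)))))).
    rewrite IH by lia. rewrite meet_assoc. reflexivity.
Qed.

(* The stuttered sequence a_1, ..., a_m, a_m (indices above m + 1 are irrelevant). *)
Definition stutter (a : nat -> L) (m : nat) : nat -> L := fun i => a (Nat.min i m).

Lemma stutter_low (a : nat -> L) (m i : nat) : i <= m -> stutter a m i = a i.
Proof. intro Hi. unfold stutter. now rewrite Nat.min_l. Qed.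

Lemma stutter_last (a : nat -> L) (m : nat) : stutter a m (S m) = a m.
Proof. unfold stutter. rewrite Nat.min_r by lia. reflexivity. Qed.

Lemma godowski_fwd_stutter (a : nat -> L) (m : nat) : 2 <= m ->
  godowski_fwd (S m) (stutter a m) = godowski_fwd m a.
Proof.
  intro Hm. unfold godowski_fwd. destruct m as [|[|k]]; [lia|lia|].
  replace (S (S (S k)) - 1) with (S (S k)) by lia.
  replace (S (S k) - 1) with (S k) by lia.
  change (chain_imp (stutter a (S (S k))) (S (S k))) with
    (meet (chain_imp (stutter a (S (S k))) (S k))
          (oimp (stutter a (S (S k)) (S (S k))) (stutter a (S (S k)) (S (S (S k)))))).
  rewrite stutter_last, !stutter_low, oimp_self, meet_top by lia.
  rewrite (chain_imp_ext _ a) by (intros; apply stutter_low; lia).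
  reflexivity.
Qed.

Lemma godowski_bwd_stutter (a : nat -> L) (m : nat) : 2 <= m ->
  godowski_bwd (S m) (stutter a m) = godowski_bwd m a.
Proof.
  intro Hm. unfold godowski_bwd. replace (S m - 1) with (S (m - 1)) by lia.
  rewrite rchain_imp_peel by lia.
  rewrite stutter_last, stutter_low, oimp_self, top_meet by lia.
  rewrite (rchain_imp_ext m _ a) by (intros; apply stutter_low; lia).
  rewrite !stutter_low by lia. reflexivity.
Qed.

Lemma nGo_succ_down (m : nat) : 2 <= m -> nGo L (S m) -> nGo L m.
Proof.
  intros Hm HGo a.
  rewrite <- godowski_fwd_stutter, <- godowski_bwd_stutter by exact Hm.
  apply HGo.
Qed.

End OrthoFacts.

Theorem lemma5p7 (n : nat) (hn : 4 <= n) (L : Ortholattice) :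
  nGo L n -> nGo L (n - 1).
Proof.
  replace n with (S (n - 1)) at 1 by lia.
  apply nGo_succ_down. lia.
Qed.
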